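(* For $n\geq5$, \[\frac{n+2}{n}\leq \frac{\ell_{n-1}(n)}{\ell_{n-2}(n)}\leq \frac{4n+7}{4n-2}.\]
   Context: For $0\leq i\leq 2n$, $\ell_i(n)$ denotes the number of vectors in $\{0,1,2\}^n$ whose coordinates sum to $i$. *)

From HB Require Import structures.
From mathcomp Require Import all_boot all_order all_algebra.
Set Implicit Arguments. Unset Strict Implicit. Unset Printing Implicit Defensive.

Definition ell (i n : nat) : nat :=
  #|[set f : {ffun 'I_n -> 'I_3} | (\sum_(j < n) (f j : nat))%N == i]|.

(* Write [a_N], [b_N], [c_N] for the coefficients of [X^N], [X^(N-1)], [X^(N-2)] in
   [(1 + X + X^2)^N], so that [ell (N-1) N / ell (N-2) N = b_N / c_N].  Comparing
   coefficients in [((1 + X + X^2)^N)' (1 + X + X^2) = N (1 + X + X^2)^N (1 + 2X)] gives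
   [N a_N = b_N + (N + 2) c_N] and the symmetry of the coefficients around [X^N], hence
   [b_N / c_N = (N + 2) / (N r_N - 1)] for the central ratio [r_N = a_N / b_N], and the
   claim becomes [(4N^2 + 10N + 3) / (N (4N + 7)) <= r_N <= (4N + 3) / (4N)].  Pascal's
   rule [coef_(N+1) k = coef_N k + coef_N (k-1) + coef_N (k-2)] turns these into the
   recursion [r_(N+1) = (N + 2)(r_N + 2) / ((N + 1)(2 r_N + 1))], decreasing in [r_N],
   which carries the lower bound at [N] to the upper bound at [N + 1], and for [N >= 4]
   the upper bound at [N] above the lower bound at [N + 1].  The induction starts at
   [r_5 = 51/45], which is exactly the lower bound. *)

From HB Require Import structures.
From mathcomp Require Import all_boot all_order all_algebra ring lra.
Set Implicit Arguments. Unset Strict Implicit. Unset Printing Implicit Defensive.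
Import Order.TTheory GRing.Theory Num.Theory.
Local Open Scope ring_scope.

Definition trinom_poly : {poly rat} := 1 + 'X + 'X^2.

Definition trinom (n m : nat) : rat := (trinom_poly ^+ n)`_m.

Lemma trinom_polyE : trinom_poly = \sum_(k < 3) 'X^k.
Proof. by rewrite !big_ord_recr big_ord0 /= add0r expr0 expr1. Qed.

(* Expanding [(\sum_(k < 3) 'X^k) ^+ n] by distributivity indexes the monomials by
   [f : 'I_n -> 'I_3]. *)
Lemma ell_trinom i n : (ell i n)%:R = trinom n i.
Proof.
rewrite /trinom -[n in _ ^+ n]card_ord -prodr_const trinom_polyE.
rewrite bigA_distr_bigA /= coef_sum /ell cardsE -sum1_card natr_sum big_mkcond /=.
apply: eq_bigr => f _; rewrite prodrXr coefXn eq_sym unfold_in /=.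
by rewrite -[X in if X then _ else _]/(_ == _ :> nat); case: (_ == _).
Qed.

Lemma trinom_ge0 n m : 0 <= trinom n m.
Proof. by rewrite -ell_trinom. Qed.

Lemma coefM_trinom_poly (q : {poly rat}) m :
  (q * trinom_poly)`_m.+2 = q`_m.+2 + q`_m.+1 + q`_m.
Proof. by rewrite !mulrDr mulr1 !coefD coefMX coefMXn /= subn2. Qed.

Lemma trinomS n m : trinom n.+1 m.+2 = trinom n m.+2 + trinom n m.+1 + trinom n m.
Proof. by rewrite /trinom exprSr coefM_trinom_poly. Qed.

Lemma trinom0m m : trinom 0 m = (m == 0%N)%:R.
Proof. by rewrite /trinom expr0 coef1. Qed.

Lemma trinomn0 n : trinom n 0 = 1.
Proof.
elim: n => [|n IHn]; first by rewrite trinom0m.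
by rewrite /trinom exprSr coef0M -/(trinom n 0) IHn !coefD coefX coefXn coefC mul1r.
Qed.

Lemma trinomn1 n : trinom n 1 = n%:R.
Proof.
elim: n => [|n IHn]; first by rewrite trinom0m.
rewrite /trinom exprSr !mulrDr mulr1 !coefD coefMX coefMXn /= addr0.
by rewrite -/(trinom n 1) -/(trinom n 0) IHn trinomn0 natr1.
Qed.

(* Coefficient [m.+2] of [(P ^+ n)^`() * P = n * P ^+ n * P^`()], with [P = 1 + X + X^2]. *)
Lemma trinom_deriv n m :
  m.+3%:R * trinom n m.+3 + m.+2%:R * trinom n m.+2 + m.+1%:R * trinom n m.+1
  = n%:R * (trinom n m.+2 + 2 * trinom n m.+1).
Proof.
have deriv_trinom_poly : trinom_poly^`() = 1 + 'X *+ 2.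
  by rewrite !derivE /= add0r expr1.
have Euler : (trinom_poly ^+ n)^`() * trinom_poly
    = (trinom_poly ^+ n + (trinom_poly ^+ n * 'X) *+ 2) *+ n.
  case: n => [|n]; first by rewrite expr0 derivC mul0r mulr0n.
  by rewrite deriv_exp deriv_trinom_poly exprSr /=; ring.
have := congr1 (fun p : {poly rat} => p`_m.+2) Euler.
rewrite coefM_trinom_poly !coef_deriv coefMn coefD coefMn coefMX /=.
by rewrite !mulr_natl => ->.
Qed.

Lemma trinom_sym_center n : trinom n.+1 n.+2 = trinom n.+1 n.
Proof.
case: n => [|n]; first by rewrite trinomS !trinom0m trinomn0 /=; lra.
have := trinom_deriv n.+2 n; rewrite -!natr1 => E.
have /eqP : (n%:R + 3) * (trinom n.+2 n.+3 - trinom n.+2 n.+1) = 0 by lra.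
by rewrite mulf_eq0 subr_eq0 => /orP [/eqP|/eqP //]; have := ler0n rat n; lra.
Qed.

Lemma trinom_below_center n :
  trinom n.+3 n.+1 = (n.+3%:R * trinom n.+3 n.+3 - trinom n.+3 n.+2) / (n.+3%:R + 2).
Proof.
have z_gt0 : 0 < n.+3%:R + 2 :> rat by rewrite -natrD ltr0n.
apply: (canRL (mulfK (lt0r_neq0 z_gt0))).
by have := trinom_deriv n.+3 n; rewrite -!natr1; lra.
Qed.

Lemma trinom5_center : trinom 5 5 = 51 /\ trinom 5 4 = 45.
Proof. by rewrite !(trinomS, trinomn1, trinomn0, trinom0m) /=; split; lra. Qed.

Section CenterRatioBounds.
Context {R : realFieldType}.
Implicit Types x r : R.

Definition center_ratio_lb x := (4 * x ^+ 2 + 10 * x + 3) / (x * (4 * x + 7)).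
Definition center_ratio_ub x := (4 * x + 3) / (4 * x).
Definition center_ratio_step x r := (x + 2) * (r + 2) / ((x + 1) * (2 * r + 1)).

Lemma center_ratio_lbE x r :
  0 < x -> (center_ratio_lb x <= r) = (4 * x ^+ 2 + 10 * x + 3 <= r * (x * (4 * x + 7))).
Proof. by move=> x0; rewrite ler_pdivrMr //; nra. Qed.

Lemma center_ratio_ubE x r : 0 < x -> (r <= center_ratio_ub x) = (r * (4 * x) <= 4 * x + 3).
Proof. by move=> x0; rewrite ler_pdivlMr //; nra. Qed.

Lemma center_ratio_lb_gt1 x : 0 < x -> 1 < center_ratio_lb x.
Proof. by move=> x0; rewrite /center_ratio_lb ltr_pdivlMr; nra. Qed.

(* [center_ratio_step x] is decreasing and maps [(4x+9)/(4x+6)], a weakening of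
   [center_ratio_lb x], onto [center_ratio_ub (x + 1)]. *)
Lemma center_ratio_step_le_ub x r :
  0 < x -> center_ratio_lb x <= r -> center_ratio_step x r <= center_ratio_ub (x + 1).
Proof.
move=> x0; rewrite center_ratio_lbE // => lb_r.
have r_gt1 : 1 < r by nra.
have lb_r' : 4 * x + 9 <= (4 * x + 6) * r by nra.
rewrite /center_ratio_step /center_ratio_ub ler_pdivrMr; last nra.
rewrite mulrAC ler_pdivlMr; nra.
Qed.

(* [center_ratio_ub x] is mapped onto [(x+2)(4x+1)/((x+1)(4x+2))], which is at least
   [center_ratio_lb (x + 1)] exactly when [x >= 4]. *)
Lemma center_ratio_lb_le_step x r :
  4 <= x -> 0 <= r -> r <= center_ratio_ub x -> center_ratio_lb (x + 1) <= center_ratio_step x r.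
Proof.
move=> x4 r0; rewrite center_ratio_ubE; last lra; move=> ub_r.
rewrite /center_ratio_step /center_ratio_lb ler_pdivrMr; last nra.
rewrite mulrAC ler_pdivlMr; last nra.
have key : r * (4 * x ^+ 2 + 17 * x + 12) <= 4 * x ^+ 2 + 20 * x + 27.
  rewrite -(ler_pM2l (_ : 0 < 4 * x)); last lra.
  rewrite mulrCA mulrA; apply: le_trans (_ : (4 * x + 3) * (4 * x ^+ 2 + 17 * x + 12) <= _).
    by rewrite ler_pM2r //; nra.
  lra.
rewrite -subr_ge0.
have -> : (x + 2) * (r + 2) * ((x + 1) * (4 * (x + 1) + 7))
    - (4 * (x + 1) ^+ 2 + 10 * (x + 1) + 3) * ((x + 1) * (2 * r + 1))
    = (x + 1) * (4 * x ^+ 2 + 20 * x + 27 - r * (4 * x ^+ 2 + 17 * x + 12)) by ring.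
by apply: mulr_ge0; lra.
Qed.

Lemma center_ratio_bounds_adjacent x r :
  1 <= x -> center_ratio_lb x <= r -> r <= center_ratio_ub x ->
  (x + 2) / x <= (x + 2) / (x * r - 1) /\ (x + 2) / (x * r - 1) <= (4 * x + 7) / (4 * x - 2).
Proof.
move=> x1; rewrite center_ratio_lbE ?center_ratio_ubE; try lra; move=> lb_r ub_r.
have xr1 : 0 < x * r - 1.
  rewrite -(pmulr_lgt0 _ (_ : 0 < 4 * x + 7)); last lra.
  have : x <= x ^+ 2 by nra.
  lra.
split.
  by rewrite ler_pM2l ?lef_pV2 ?posrE; lra.
rewrite ler_pdivrMr; last lra.
by rewrite mulrAC ler_pdivlMr; lra.
Qed.
End CenterRatioBounds.

Definition center_ratio (N : nat) : rat := trinom N N / trinom N N.-1.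

Lemma center_ratio_succ n :
  0 < trinom n.+3 n.+2 ->
  center_ratio n.+4 = center_ratio_step n.+3%:R (center_ratio n.+3).
Proof.
move=> b_gt0; rewrite /center_ratio /center_ratio_step /=.
rewrite [trinom n.+4 n.+4]trinomS [trinom n.+4 n.+3]trinomS trinom_sym_center.
rewrite trinom_below_center.
have a_ge0 := trinom_ge0 n.+3 n.+3; have x_gt0 : 0 < n.+3%:R :> rat by [].
move: a_ge0 b_gt0 x_gt0; set x := n.+3%:R; set a := trinom _ _; set b := trinom _ _.
clearbody x a b => a_ge0 b_gt0 x_gt0.
by field; apply/and5P; split; apply: lt0r_neq0; nra.
Qed.

Lemma center_ratio_denom_gt0 N : 0 < center_ratio N -> 0 < trinom N N.-1.
Proof.
move=> rho_gt0; rewrite lt0r trinom_ge0 andbT; apply/eqP => b0.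
by move: rho_gt0; rewrite /center_ratio b0 invr0 mulr0 ltxx.
Qed.

Lemma center_ratio_bounds N : (5 <= N)%N ->
  center_ratio_lb N%:R <= center_ratio N <= center_ratio_ub N%:R.
Proof.
elim: N => // N IHN; rewrite leq_eqVlt => /orP [/eqP <- | ].
  by rewrite /center_ratio /center_ratio_lb /center_ratio_ub; have [-> ->] := trinom5_center.
move=> N_ge5; have /andP [lb_N ub_N] := IHN N_ge5.
have [n def_N] : exists n, N = n.+3 by case: N N_ge5 {IHN lb_N ub_N} => [|[|[|n]]] // _; exists n.
subst N.
have x_ge4 : 4 <= n.+3%:R :> rat by rewrite ler_nat; apply: ltnW.
have x_gt0 : 0 < n.+3%:R :> rat by [].
have rho_gt0 := lt_trans ltr01 (lt_le_trans (center_ratio_lb_gt1 x_gt0) lb_N).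
rewrite center_ratio_succ; last exact: center_ratio_denom_gt0 rho_gt0.
by rewrite -natr1 (center_ratio_step_le_ub x_gt0 lb_N) (center_ratio_lb_le_step x_ge4 (ltW rho_gt0) ub_N).
Qed.

Lemma trinom_adjacent_ratio n : 1 < center_ratio n.+3 ->
  trinom n.+3 n.+2 / trinom n.+3 n.+1 = (n.+3%:R + 2) / (n.+3%:R * center_ratio n.+3 - 1).
Proof.
move=> rho_gt1; have b_gt0 := center_ratio_denom_gt0 (lt_trans ltr01 rho_gt1).
rewrite trinom_below_center; have x_ge1 : 1 <= n.+3%:R :> rat by rewrite ler1n.
move: rho_gt1 b_gt0 x_ge1; rewrite /center_ratio /=.
set x := n.+3%:R; set a := trinom _ _; set b := trinom _ _.
clearbody x a b => + b_gt0 x_ge1; rewrite ltr_pdivlMr // mul1r => b_lt_a.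
by field; apply/and3P; split; apply: lt0r_neq0; nra.
Qed.

Theorem mainTheorem16 (n : nat) (hn : (5 <= n)%N) :
  (n%:R + 2) / n%:R <= (ell n.-1 n)%:R / (ell n.-2 n)%:R :> rat /\
  (ell n.-1 n)%:R / (ell n.-2 n)%:R <= (4 * n%:R + 7) / (4 * n%:R - 2) :> rat.
Proof.
have [m def_n] : exists m, n = m.+3 by case: n hn => [|[|[|m]]] // _; exists m.
subst n; have /andP [lb_rho ub_rho] := center_ratio_bounds hn.
have x_ge1 : 1 <= m.+3%:R :> rat by rewrite ler1n.
have rho_gt1 := lt_le_trans (center_ratio_lb_gt1 (lt_le_trans ltr01 x_ge1)) lb_rho.
rewrite !ell_trinom trinom_adjacent_ratio //.
exact: center_ratio_bounds_adjacent.
Qed.
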